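(* For every graph $G$ and every integer $\ell\ge 0$, a set $B\subseteq V(G)$ is an $\ell$-leaky forcing set of $G$ if and only if it is an $\ell$-edge-leaky forcing set of $G$. In particular $\operatorname{Z}_{(\ell)}(G)=\operatorname{Z}'_{(\ell)}(G)$.
   Context: All graphs are finite, simple and undirected. Zero forcing: a blue vertex $u$ with exactly one white neighbor $w$ may force $w$ (color it blue), written $u\to w$. A vertex leak is a vertex not allowed to perform any force; $B$ is an $\ell$-leaky forcing set if for every set of at most $\ell$ vertex leaks, exhaustively applying the forcing rule from initial blue set $B$ (leaks never forcing) colors all of $V(G)$ blue. An edge leak is an edge $xy$ across which no force may be performed (neither $x\to y$ nor $y\to x$); $B$ is an $\ell$-edge-leaky forcing set if for every set of at most $\ell$ edge leaks, $B$ colors all of $V(G)$ blue without forcing across leak edges. $\operatorname{Z}_{(\ell)}(G)$ and $\operatorname{Z}'_{(\ell)}(G)$ are the minimum sizes of an $\ell$-leaky forcing set and of an $\ell$-edge-leaky forcing set, respectively. *)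

(* A simple graph: finite vertex type T with a symmetric,
   irreflexive adjacency relation e. *)
From mathcomp Require Import all_boot.
Set Implicit Arguments. Unset Strict Implicit. Unset Printing Implicit Defensive.

Section Forcing.
Variables (T : finType) (e : rel T).

Definition force_step (ok : T -> T -> bool) (S S' : {set T}) : bool :=
  [exists u : T, exists w : T,
     [&& u \in S, e u w, w \notin S, ok u w,
         [forall x : T, (e u x && (x != w)) ==> (x \in S)] &
         S' == w |: S]].

Definition forces_all (ok : T -> T -> bool) (B : {set T}) : bool :=
  [forall S : {set T}, connect (force_step ok) B S ==>
    (~~ [exists S' : {set T}, force_step ok S S']) ==> (S == setT)].

(* Vertex leaks: leaks never force. *)
Definition leaky_forcing_set (l : nat) (B : {set T}) : bool :=
  [forall L : {set T}, (#|L| <= l) ==> forces_all (fun u _ => u \notin L) B].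

Definition edge_set_of (L : {set {set T}}) : bool :=
  [forall X in L, exists x : T, exists y : T, e x y && (X == [set x; y])].

Definition edge_leaky_forcing_set (l : nat) (B : {set T}) : bool :=
  [forall L : {set {set T}}, edge_set_of L ==> (#|L| <= l) ==>
    forces_all (fun u w => [set u; w] \notin L) B].

(* Minimum sizes (V(G) itself is always such a set, so #|T| is a valid
   default for the minimum). *)
Definition Z_leaky (l : nat) : nat :=
  \big[minn/#|T|]_(B : {set T} | leaky_forcing_set l B) #|B|.
Definition Z_edge_leaky (l : nat) : nat :=
  \big[minn/#|T|]_(B : {set T} | edge_leaky_forcing_set l B) #|B|.

End Forcing.

From mathcomp Require Import all_boot.
Set Implicit Arguments. Unset Strict Implicit. Unset Printing Implicit Defensive.

(* The key observation is a characterisation of failure: for any restriction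
   [ok] on which forces are allowed, the forcing process from B fails to colour
   V(G) iff some proper superset S of B is "stalled", i.e. every force
   available in S is forbidden by [ok] (the process ends in such a set, and
   conversely it can never leave a stalled superset of B).

   In a colouring S each vertex u has at most one possible force u -> w
   (w is its unique white neighbour), written u -> target S u.  Hence:
   - l edge leaks stalling S give the l vertex leaks consisting of the
     forcing vertices u whose edge {u, target S u} is a leak (the map
     u |-> {u, target S u} is injective since u is blue and its target white);
   - l vertex leaks stalling S give the at most l edge leaks {u, target S u}
     for the leaks u that can force in S. *)

Section Forcing.
Variables (T : finType) (e : rel T).
Implicit Types (ok : T -> T -> bool) (B C S : {set T}).

Definition can_force S u w :=
  [&& u \in S, e u w, w \notin S & [forall x, (e u x && (x != w)) ==> (x \in S)]].

Lemma can_force_uniq S u w w' : can_force S u w -> can_force S u w' -> w = w'.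
Proof.
case/and4P=> _ _ _ /forallP only_w /and4P[_ euw' w'S _].
apply/eqP; apply: contraNT w'S => ww'.
by have /implyP := only_w w'; apply; rewrite euw' eq_sym.
Qed.

Lemma force_stepP ok S S' :
  reflect (exists u w, [/\ can_force S u w, ok u w & S' = w |: S])
          (force_step e ok S S').
Proof.
apply: (iffP existsP) => [[u /existsP[w]]|[u [w [/and4P[uS euw wS only_w] okuw ->]]]].
  case/and5P=> uS euw wS okuw /andP[only_w /eqP ->].
  by exists u, w; split => //; apply/and4P.
by exists u; apply/existsP; exists w; rewrite uS euw wS okuw only_w eqxx.
Qed.

Definition stalled ok S := forall u w, can_force S u w -> ~~ ok u w.

Lemma stalledP ok S : stalled ok S <-> ~~ [exists S', force_step e ok S S'].
Proof.
split=> [st|/existsPn no_step u w uSw].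
  by apply/existsP => -[S' /force_stepP[u [w [/st/negP]]]].
by apply/negP => okuw; apply: (negP (no_step (w |: S))); apply/force_stepP; exists u, w.
Qed.

Lemma connect_force_ind ok (P : {set T} -> Prop) B C :
  P B -> (forall C C', P C -> force_step e ok C C' -> P C') ->
  connect (force_step e ok) B C -> P C.
Proof.
move=> PB step /connectP[p + ->] {C}.
by elim: p B PB => [|c p IH] B PB //= /andP[/(step _ _ PB) Pc /(IH c Pc)].
Qed.

Lemma connect_force_sub ok B C : connect (force_step e ok) B C -> B \subset C.
Proof.
apply: (connect_force_ind (P := fun C => B \subset C)) => // C0 C' BC0 /force_stepP[u [w [_ _ ->]]].
exact: subset_trans BC0 (subsetU1 _ _).
Qed.

Lemma connect_force_stalled ok B S C :
  B \subset S -> stalled ok S -> connect (force_step e ok) B C -> C \subset S.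
Proof.
move=> BS st; apply: (connect_force_ind (P := fun C => C \subset S)) => // C0 C' C0S.
case/force_stepP=> u [w [/and4P[uC0 euw wC0 /forallP only_w] okuw ->]].
rewrite subUset C0S andbT sub1set; apply: contraTT okuw => wS; apply: st.
apply/and4P; split => //; first exact: (subsetP C0S).
by apply/forallP => x; apply/implyP => /(implyP (only_w x)); apply: (subsetP C0S).
Qed.

Lemma exists_stalled_final ok B :
  exists2 C, connect (force_step e ok) B C & stalled ok C.
Proof.
have [C BC Cmax] := @arg_maxnP _ B (connect (force_step e ok) B)
                      (fun C => #|C|) (connect0 _ _).
exists C => // u w uCw; apply/negP => okuw.
have /Cmax : connect (force_step e ok) B (w |: C).
  by apply: connect_trans BC (connect1 _); apply/force_stepP; exists u, w.
by case/and4P: uCw => _ _ wC _; rewrite cardsU1 wC /= add1n ltnn.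
Qed.

Lemma forces_allPn ok B :
  ~~ forces_all e ok B <-> exists S, [/\ B \subset S, stalled ok S & S != setT].
Proof.
split.
  case/forallPn=> S; rewrite negb_imply => /andP[BS].
  rewrite negb_imply => /andP[final nT].
  by exists S; split=> //; [apply: connect_force_sub BS | apply/stalledP].
case=> S [BS st nT]; apply/forallPn.
have [C BC stC] := exists_stalled_final ok B.
exists C; rewrite negb_imply BC /= negb_imply; apply/andP; split; first exact/stalledP.
apply: contra nT => /eqP CT; rewrite eqEsubset subsetT -CT.
exact: connect_force_stalled BS st BC.
Qed.

Section Targets.
Variable S : {set T}.

Definition forcers := [set u | [exists w, can_force S u w]].
Definition target u := odflt u [pick w | can_force S u w].

Lemma targetP u : u \in forcers -> can_force S u (target u).
Proof.
rewrite inE /target => /existsP[w uSw].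
by case: pickP => [//|/(_ w)]; rewrite uSw.
Qed.

Lemma can_force_target u w : can_force S u w -> w = target u.
Proof.
move=> uSw; have uF : u \in forcers by rewrite inE; apply/existsP; exists w.
exact: can_force_uniq uSw (targetP uF).
Qed.

(* The forcing edge {u, target u} determines the forcer u: it is the blue
   end of that edge. *)
Lemma forcing_edge_inj : {in forcers &, injective (fun u => [set u; target u])}.
Proof.
move=> u v /targetP/and4P[uS _ _ _] /targetP/and4P[_ _ tvS _] uv_edge.
have : u \in [set v; target v] by rewrite -uv_edge setU11.
by rewrite !inE => /orP[/eqP // | /eqP tv]; rewrite -tv uS in tvS.
Qed.

End Targets.

Lemma vertex_leaks_of_edge_leaks (l : nat) S (E : {set {set T}}) :
  #|E| <= l -> stalled (fun u w => [set u; w] \notin E) S ->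
  exists2 L : {set T}, #|L| <= l & stalled (fun u _ => u \notin L) S.
Proof.
move=> cardE st.
exists [set u in forcers S | [set u; target S u] \in E].
  rewrite -(card_in_imset (sub_in2 _ (@forcing_edge_inj S))); last first.
    by move=> u; rewrite inE => /andP[].
  apply: leq_trans cardE; apply: subset_leq_card.
  by apply/subsetP => _ /imsetP[u + ->]; rewrite inE => /andP[].
move=> u w uSw; rewrite negbK inE -(can_force_target uSw).
have := st u w uSw; rewrite negbK => ->; rewrite andbT inE.
by apply/existsP; exists w.
Qed.

Lemma edge_leaks_of_vertex_leaks (l : nat) S (L : {set T}) :
  #|L| <= l -> stalled (fun u _ => u \notin L) S ->
  exists2 E : {set {set T}},
    edge_set_of e E && (#|E| <= l) & stalled (fun u w => [set u; w] \notin E) S.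
Proof.
move=> cardL st; set L' := L :&: forcers S.
exists [set [set u; target S u] | u in L'].
  apply/andP; split.
    apply/forallP => X; apply/implyP => /imsetP[u /setIP[_ uF] ->].
    case/and4P: (targetP uF) => _ euw _ _; apply/existsP; exists u; apply/existsP.
    by exists (target S u); rewrite euw eqxx.
  exact: leq_trans (leq_imset_card _ _) (leq_trans (subset_leq_card (subsetIl _ _)) cardL).
move=> u w uSw; rewrite negbK (can_force_target uSw); apply: imset_f.
rewrite inE; move: (st u w uSw); rewrite negbK => -> /=.
by rewrite inE; apply/existsP; exists w.
Qed.

Lemma leaky_edge_leaky (l : nat) B :
  leaky_forcing_set e l B -> edge_leaky_forcing_set e l B.
Proof.
move=> /forallP vertex_ok; apply/forallP => E; apply/implyP => _.
apply/implyP => cardE; apply: contraT => /forces_allPn[S [BS st nT]].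
have [L cardL stL] := vertex_leaks_of_edge_leaks cardE st.
suff : ~~ forces_all e (fun u _ => u \notin L) B by rewrite (implyP (vertex_ok L)).
by apply/forces_allPn; exists S.
Qed.

Lemma edge_leaky_leaky (l : nat) B :
  edge_leaky_forcing_set e l B -> leaky_forcing_set e l B.
Proof.
move=> /forallP edge_ok; apply/forallP => L; apply/implyP => cardL.
apply: contraT => /forces_allPn[S [BS st nT]].
have [E /andP[Eset cardE] stE] := edge_leaks_of_vertex_leaks cardL st.
suff : ~~ forces_all e (fun u w => [set u; w] \notin E) B.
  by rewrite (implyP (implyP (edge_ok E) Eset) cardE).
by apply/forces_allPn; exists S.
Qed.

End Forcing.

Theorem corollary2p4 (T : finType) (e : rel T)
  (e_sym : symmetric e) (e_irr : irreflexive e) (l : nat) :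
  (forall B : {set T}, leaky_forcing_set e l B <-> edge_leaky_forcing_set e l B)
  /\ Z_leaky e l = Z_edge_leaky e l.
Proof.
have same_sets B : leaky_forcing_set e l B = edge_leaky_forcing_set e l B.
  by apply/idP/idP; [apply: leaky_edge_leaky | apply: edge_leaky_leaky].
by split=> [B|]; [rewrite same_sets | apply: eq_bigl].
Qed.
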